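(* Let $n\ge 3$ be a prime power and let $x,y,z$ be the coordinate functions of the GK curve over $\mathbb{F}_{n^6}$. For $1\le k\le n^2-1$ define sets of rational functions $T_k$ as follows. For $1\le k\le n-1$: $T_k=\{y^iz^j/x^k : 0\le i\le k,\ k-i+1\le j\le n^2-n\}\cup\{y^iz^j/x^k : k+1\le i\le n,\ 0\le j\le n^2-n\}$. For $n\le k\le n^2-n-2$: $T_k=\{y^iz^j/x^k : 0\le i\le n,\ k-i+1\le j\le n^2-n\}$. For $n^2-n-1\le k\le n^2-1$: $T_k=\{y^iz^j/x^k : k-n^2+n+1\le i\le n,\ k-i+1\le j\le n^2-n\}$. Let $T=\bigcup_{k=1}^{n^2-1}T_k$. Then the functions listed are pairwise distinct and $|T|=g=\tfrac12(n^5-2n^3+n^2)$, the genus of the GK curve.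
   Context: Let $n\ge 2$ be a prime power and $q=n^3$. The GK curve is the (absolutely irreducible, nonsingular) curve in $\mathbb{P}^3$ over $\mathbb{F}_{q^2}$ with affine equations $Z^{n^2-n+1}=Y\,h(X)$, $X^n+X=Y^{n+1}$, where $h(X)=\sum_{i=0}^{n}(-1)^{i+1}X^{i(n-1)}$. Its function field is $\mathbb{F}_{q^2}(x,y,z)$ with $z^{n^2-n+1}=y h(x)$ and $x^n+x=y^{n+1}$. It has a unique point at infinity $P_\infty=(1:0:0:0)$, and $P_0$ denotes the affine point $(0,0,0)$. Its genus is $g=\tfrac12(n^3+1)(n^2-2)+1=\tfrac12(n^5-2n^3+n^2)$. *)

From HB Require Import structures.
From mathcomp Require Import all_boot all_order all_algebra all_field.
Set Implicit Arguments. Unset Strict Implicit. Unset Printing Implicit Defensive.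
Import GRing.Theory.
Local Open Scope ring_scope.

Definition prime_power (n : nat) : Prop :=
  exists p e : nat, prime p /\ n = (p ^ e.+1)%N.

Definition gk_h (R : pzRingType) (n : nat) (x : R) : R :=
  \sum_(i < n.+1) (-1) ^+ i.+1 * x ^+ (i * (n - 1)).

(* Membership of the exponent triple (i,j,k) (function y^i z^j / x^k) in T_k,
   for 1 <= k <= n^2 - 1.  Truncated subtractions are avoided by writing the
   lower bounds additively:  k-i+1 <= j  as  k+1 <= j+i,  and
   k-n^2+n+1 <= i  as  k+n+1 <= i+n^2. *)
Definition inT (n i j k : nat) : bool :=
  [&& (1 <= k)%N, (k <= n ^ 2 - 1)%N &
   if (k <= n - 1)%N then
     ((i <= k) && (k + 1 <= j + i) && (j <= n ^ 2 - n))%N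
     || ((k + 1 <= i) && (i <= n) && (j <= n ^ 2 - n))%N
   else if (k <= n ^ 2 - n - 2)%N then
     ((i <= n) && (k + 1 <= j + i) && (j <= n ^ 2 - n))%N
   else
     ((k + n + 1 <= i + n ^ 2) && (i <= n) && (k + 1 <= j + i)
      && (j <= n ^ 2 - n))%N].

(* Exponent triples ((i, j), k); the bounds i <= n, j <= n^2-n, k <= n^2-1
   are implied by inT, so the finite index type loses nothing. *)
Definition Tidx (n : nat) : {set 'I_n.+1 * 'I_(n ^ 2 - n).+1 * 'I_(n ^ 2)} :=
  [set t : 'I_n.+1 * 'I_(n ^ 2 - n).+1 * 'I_(n ^ 2) | inT n t.1.1 t.1.2 t.2].

Definition gk_fun (L : fieldType) (x y z : L) (n : nat)
  (t : 'I_n.+1 * 'I_(n ^ 2 - n).+1 * 'I_(n ^ 2)) : L :=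
  y ^+ t.1.1 * z ^+ t.1.2 / x ^+ t.2.

Definition gk_T (L : fieldType) (x y z : L) (n : nat) : seq L :=
  undup [seq gk_fun x y z t | t <- enum (Tidx n)].

Definition gk_genus (n : nat) : nat := ((n ^ 5 + n ^ 2 - 2 * n ^ 3) %/ 2)%N.

From HB Require Import structures.
From mathcomp Require Import all_boot all_order all_algebra all_field.
From mathcomp Require Import zify ring.

Set Implicit Arguments.
Unset Strict Implicit.
Unset Printing Implicit Defensive.

Import GRing.Theory.

(* The triples (i, j, k) indexing T are exactly those with i <= n, j <= n^2 - n
   and 0 < k < i + j, so |T| is the double sum of i + j - 1, which evaluates to
   ((n^3 + 1)(n^2 - 2) + 2) / 2 = g.
   For distinctness, raise y^i z^j / x^k to the power P = (n^2 - n + 1)(n + 1):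
   the curve equations y^(n+1) = x (x^(n-1) + 1) and z^(n^2-n+1) = y h(x) turn
   it into x^e (x^(n-1) + 1)^b h(x)^c, and since x is transcendental two such
   expressions agree only if the polynomials X^e A^b h^c do.  The order at 0
   recovers e and the degree recovers b (n - 1) + c n (n - 1); because
   n^2 - n + 1 is coprime to 2 n, these two numbers determine i, j and k. *)

Lemma leq_sqrn n : (n <= n ^ 2)%N.
Proof. by rewrite -mulnn; nia. Qed.

Lemma inT_bounded n i j k : (i <= n)%N -> (j <= n ^ 2 - n)%N ->
  inT n i j k = (0 < k < i + j)%N.
Proof.
move=> le_in le_jn; rewrite /inT; have := leq_sqrn n.
by case: ifP => ?; last case: ifP => ?; move=> ?; apply/idP/idP; lia.
Qed.

Lemma sum_ord_between M s : \sum_(k < M) (0 < k < s)%N = (minn M s).-1.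
Proof.
elim: M => [|M IH]; first by rewrite big_ord0 min0n.
by rewrite big_ord_recr /= IH; case: (leqP 1 M); case: (ltnP M s) => /=; lia.
Qed.

Lemma sum_ord_addn a b : (2 * \sum_(j < b.+1) (a + j) = b.+1 * (2 * a + b))%N.
Proof.
elim: b => [|b IH]; first by rewrite big_ord1 /=; lia.
by rewrite big_ord_recr /= mulnDr IH; lia.
Qed.

Lemma sum_ord_pred b : (2 * \sum_(j < b.+1) j.-1 + 2 * b = b * b.+1)%N.
Proof.
elim: b => [|b IH]; first by rewrite big_ord1.
by rewrite big_ord_recr /= mulnDr; move: IH; move: (\sum_(j < b.+1) _) => S; nia.
Qed.

Lemma sum_grid_pred_addn a b :
  (2 * \sum_(i < a.+1) \sum_(j < b.+1) (i + j).-1 + 2 * (a * b + a + b)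
     = a.+1 * b.+1 * (a + b))%N.
Proof.
elim: a => [|a IH].
  rewrite big_ord1 /=; under eq_bigr do rewrite add0n.
  by have := sum_ord_pred b; move: (\sum_(j < b.+1) _) => S; lia.
rewrite big_ord_recr /= mulnDr.
have -> : \sum_(j < b.+1) (a.+1 + j).-1 = \sum_(j < b.+1) (a + j).
  by apply: eq_bigr => j _; rewrite addSn.
have := sum_ord_addn a b; move: IH.
by move: (\sum_(j < b.+1) _) (\sum_(i < a.+1) _) => S T; nia.
Qed.

Lemma mem_Tidx n (t : 'I_n.+1 * 'I_(n ^ 2 - n).+1 * 'I_(n ^ 2)) :
  (t \in Tidx n) = (0 < t.2 < t.1.1 + t.1.2)%N.
Proof. by rewrite inE inT_bounded // -ltnS ltn_ord. Qed.

Lemma card_Tidx n :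
  #|Tidx n| = (\sum_(i < n.+1) \sum_(j < (n ^ 2 - n).+1) (i + j).-1)%N.
Proof.
rewrite -sum1_card big_mkcond /=.
have -> : (\sum_t (if t \in Tidx n then 1 else 0) =
    \sum_(i < n.+1) \sum_(j < (n ^ 2 - n).+1) \sum_(k < n ^ 2)
      (if ((i, j), k) \in Tidx n then 1 else 0))%N.
  by rewrite pair_bigA pair_bigA; apply: eq_bigr => [[[i j] k]].
apply: eq_bigr => i _; apply: eq_bigr => j _.
rewrite (eq_bigr (fun k : 'I_(n ^ 2) => (0 < k < i + j)%N : nat)); last first.
  by move=> k _; rewrite mem_Tidx; case: ifP.
rewrite sum_ord_between; congr _.-1; apply/minn_idPr.
by have := ltn_ord i; have := ltn_ord j; have := leq_sqrn n; lia.
Qed.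

Lemma double_card_Tidx n : (2 * #|Tidx n| = n ^ 5 + n ^ 2 - 2 * n ^ 3)%N.
Proof.
have := sum_grid_pred_addn n (n ^ 2 - n); rewrite -card_Tidx.
move: #|Tidx n| => c; have := leq_sqrn n.
by rewrite !expnS expn0 !muln1; nia.
Qed.

Lemma coprime_mulnD_inj m d a1 a2 j1 j2 : coprime m d ->
  (j1 < m)%N -> (j2 < m)%N -> (m * a1 + d * j1 = m * a2 + d * j2)%N ->
  j1 = j2 /\ a1 = a2.
Proof.
move=> co_md lt1 lt2 E.
suff j12 : j1 = j2.
  split=> //; apply/eqP; rewrite -(eqn_pmul2l (leq_ltn_trans (leq0n _) lt1)).
  by apply/eqP; move: E; rewrite j12 => /addIn.
wlog le12 : j1 j2 a1 a2 lt1 lt2 E / (j1 <= j2)%N.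
  move=> wlog; case: (leqP j1 j2) => [le12|/ltnW le21].
    exact: (wlog j1 j2 a1 a2).
  by apply/esym/(wlog j2 j1 a2 a1).
have : (m %| j2 - j1)%N.
  rewrite -(Gauss_dvdr _ co_md) mulnBr.
  have -> : (d * j2 - d * j1 = m * (a1 - a2))%N by rewrite mulnBr; lia.
  exact: dvdn_mulr.
by move/dvdn_leq; lia.
Qed.

Lemma coprime_sqrn_subn_succ n : coprime (n ^ 2 - n + 1) (2 * n).
Proof.
case: n => // n.
have -> : (n.+1 ^ 2 - n.+1 + 1 = (n * n.+1).+1)%N by rewrite -mulnn; nia.
rewrite coprimeMr coprimen2 /= oddM andbN /= coprime_sym.
by rewrite /coprime -(addn1 (n * n.+1)) gcdnMDl gcdn1.
Qed.

Lemma gk_exponents_inj n i1 j1 k1 i2 j2 k2 : (2 <= n)%N ->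
    (j1 <= n ^ 2 - n)%N -> (j2 <= n ^ 2 - n)%N ->
    let m := (n ^ 2 - n + 1)%N in
  (i1 * m + j1 + k2 * (m * n.+1) = i2 * m + j2 + k1 * (m * n.+1))%N ->
  ((i1 * m + j1) * (n - 1) + j1 * n.+1 * (n * (n - 1)) =
   (i2 * m + j2) * (n - 1) + j2 * n.+1 * (n * (n - 1)))%N ->
  [/\ i1 = i2, j1 = j2 & k1 = k2].
Proof.
move=> n_ge2 le_j1 le_j2 m val_eq deg_eq.
have m_eq : (m * (n - 1) + 2 * n * (n - 1) = (n * n.+1 + 1) * (n - 1))%N.
  by rewrite /m -mulnn; nia.
have [j12 ij12] : j1 = j2 /\ (i1 + j1 = i2 + j2)%N.
  apply: (@coprime_mulnD_inj m (2 * n) _ _ _ _ (coprime_sqrn_subn_succ n)); try lia.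
  apply/eqP; rewrite -(eqn_pmul2r (_ : 0 < n - 1)%N); last by lia.
  by apply/eqP; move: deg_eq m_eq; nia.
have i12 : i1 = i2 by lia.
subst j2 i2; split=> //.
have m_gt0 : (0 < m * n.+1)%N by rewrite muln_gt0 /m addn1.
by apply/eqP; rewrite -(eqn_pmul2r m_gt0); apply/eqP; lia.
Qed.

Local Open Scope ring_scope.

Section XAdicValuation.
Variable R : fieldType.
Implicit Types p q : {poly R}.

Lemma mup0_Xn_mul e p : ~~ root p 0 -> mup 0 ('X^e * p) = e.
Proof.
by move=> p0; rewrite mupMl // -[X in X ^+ e]subr0 -polyC0 mup_XsubCX eqxx.
Qed.

Lemma size_mul_pred p q : p != 0 -> q != 0 ->
  (size (p * q)).-1 = ((size p).-1 + (size q).-1)%N.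
Proof.
move=> p0 q0; rewrite (size_mul p0 q0); move: p0 q0; rewrite -!size_poly_gt0.
by case: (size p) (size q) => [|a] [|b] //= _ _; rewrite addnS.
Qed.

Lemma Xn_mul_powers_inj (A H : {poly R}) e1 b1 c1 e2 b2 c2 :
  ~~ root A 0 -> ~~ root H 0 ->
  'X^e1 * A ^+ b1 * H ^+ c1 = 'X^e2 * A ^+ b2 * H ^+ c2 ->
  e1 = e2 /\
  (b1 * (size A).-1 + c1 * (size H).-1 = b2 * (size A).-1 + c2 * (size H).-1)%N.
Proof.
move=> A0 H0; rewrite -!mulrA.
have nzA : A != 0 by apply: contraNneq A0 => ->; rewrite root0.
have nzH : H != 0 by apply: contraNneq H0 => ->; rewrite root0.
have rootAH b c : ~~ root (A ^+ b * H ^+ c) 0.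
  by rewrite rootM !rootE !horner_exp !expf_eq0 -!rootE negb_or !negb_and A0 H0 !orbT.
have size_XAH e b c : (size ('X^e * (A ^+ b * H ^+ c))).-1 =
    (e + (b * (size A).-1 + c * (size H).-1))%N.
  rewrite !size_mul_pred ?mulf_neq0 ?expf_neq0 ?polyX_eq0 //.
  by rewrite size_polyXn !size_exp mulnC [(_ * c)%N]mulnC.
move=> E; have e12 : e1 = e2.
  by rewrite -(mup0_Xn_mul e1 (rootAH b1 c1)) E mup0_Xn_mul.
by split=> //; move/(congr1 (fun p => (size p).-1)): E; rewrite !size_XAH e12 => /addnI.
Qed.

End XAdicValuation.

Section GKPolynomials.
Variable R : fieldType.

Definition gk_hpoly n : {poly R} :=
  \sum_(i < n.+1) ((-1) ^+ i.+1)%:P * 'X^(i * (n - 1)).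

Definition gk_apoly n : {poly R} := 'X^(n - 1) + 1.

Variable n : nat.
Hypothesis n_gt1 : (1 < n)%N.

Lemma horner_gk_hpoly0 : (gk_hpoly n).[0] = -1.
Proof.
rewrite horner_sum big_ord_recl /= mul0n hornerCM hornerXn expr0 mulr1 expr1.
rewrite big1 ?addr0 // => i _; rewrite hornerCM hornerXn expr0n /=.
by rewrite muln_eq0 subn_eq0 leqNgt n_gt1 orbF mulr0.
Qed.

Lemma size_gk_hpoly : size (gk_hpoly n) = (n * (n - 1)).+1.
Proof.
have sgn_neq0 k : (-1) ^+ k != 0 :> R by rewrite expf_neq0 // oppr_eq0 oner_eq0.
rewrite /gk_hpoly big_ord_recr /= addrC size_polyDl size_Cmul ?size_polyXn //.
apply: leq_ltn_trans (size_sum _ _ _) _; apply/bigmax_leqP => i _ /=.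
by rewrite size_Cmul // size_polyXn ltn_mul2r ltn_ord subn_gt0 n_gt1.
Qed.

Lemma horner_gk_apoly0 : (gk_apoly n).[0] = 1.
Proof. by rewrite hornerD hornerXn hornerC expr0n subn_eq0 leqNgt n_gt1 add0r. Qed.

Lemma size_gk_apoly : size (gk_apoly n) = n.
Proof. by rewrite /gk_apoly -polyC1 size_XnaddC; lia. Qed.

End GKPolynomials.

Lemma horner_map_gk_monomial (F L : fieldType) (f : {rmorphism F -> L}) n (x : L)
    e b c :
  (map_poly f ('X^e * gk_apoly F n ^+ b * gk_hpoly F n ^+ c)).[x]
    = x ^+ e * (x ^+ (n - 1) + 1) ^+ b * gk_h n x ^+ c.
Proof.
rewrite !rmorphM !rmorphXn /= !hornerM !horner_exp map_polyX hornerX.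
congr (_ * _ ^+ _ * _ ^+ _).
  by rewrite rmorphD /= map_polyXn rmorph1 hornerD hornerXn hornerC.
rewrite rmorph_sum horner_sum; apply: eq_bigr => i _.
by rewrite rmorphM /= map_polyC map_polyXn hornerCM hornerXn -(rmorph_sign f i.+1).
Qed.

Section GKCurve.
Variables (n : nat) (F L : fieldType) (iota : {rmorphism F -> L}) (x y z : L).
Hypothesis n_gt1 : (1 < n)%N.
Hypothesis x_transcendental :
  forall p : {poly F}, (map_poly iota p).[x] = 0 -> p = 0.
Hypothesis gk_eq1 : x ^+ n + x = y ^+ n.+1.
Hypothesis gk_eq2 : z ^+ (n ^ 2 - n + 1) = y * gk_h n x.

Let m := (n ^ 2 - n + 1)%N.

Lemma horner_map_inj (p q : {poly F}) :
  (map_poly iota p).[x] = (map_poly iota q).[x] -> p = q.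
Proof.
by move=> E; apply/eqP; rewrite -subr_eq0; apply/eqP/x_transcendental;
  rewrite rmorphB hornerD hornerN E subrr.
Qed.

Lemma gk_x_neq0 : x != 0.
Proof.
apply/eqP => x0; have := @x_transcendental 'X.
by rewrite map_polyX hornerX x0 => /(_ erefl) /eqP; rewrite polyX_eq0.
Qed.

Lemma gk_y_expS : y ^+ n.+1 = x * (x ^+ (n - 1) + 1).
Proof. by rewrite -gk_eq1 mulrDr mulr1 -exprS subn1 prednK // ltnW. Qed.

Lemma gk_monomial_exp i j k :
  (y ^+ i * z ^+ j * x ^+ k) ^+ (m * n.+1) =
  x ^+ (i * m + j + k * (m * n.+1)) * (x ^+ (n - 1) + 1) ^+ (i * m + j)
    * gk_h n x ^+ (j * n.+1).
Proof.
have y_exp : (y ^+ i) ^+ (m * n.+1) = (x * (x ^+ (n - 1) + 1)) ^+ (i * m).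
  by rewrite -exprM mulnA mulnC exprM gk_y_expS.
have z_exp : (z ^+ j) ^+ (m * n.+1) =
    (x * (x ^+ (n - 1) + 1)) ^+ j * gk_h n x ^+ (j * n.+1).
  by rewrite -exprM mulnCA exprM gk_eq2 exprMn [y ^+ _]exprM exprAC gk_y_expS.
by rewrite !exprMn y_exp z_exp -exprM !exprMn !exprD; ring.
Qed.

Lemma gk_fun_inj : injective (gk_fun x y z (n:=n)).
Proof.
move=> [[i1 j1] k1] [[i2 j2] k2]; rewrite /gk_fun /= => /eqP.
rewrite eqr_div ?expf_neq0 ?gk_x_neq0 // => /eqP /(congr1 (fun w => w ^+ (m * n.+1))).
rewrite !gk_monomial_exp -!(horner_map_gk_monomial iota) => /horner_map_inj.
have A0 : ~~ root (gk_apoly F n) 0 by rewrite rootE horner_gk_apoly0 ?oner_eq0.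
have H0 : ~~ root (gk_hpoly F n) 0.
  by rewrite rootE horner_gk_hpoly0 ?oppr_eq0 ?oner_eq0.
case/(Xn_mul_powers_inj A0 H0); rewrite size_gk_apoly // size_gk_hpoly // -subn1 /=.
move=> val_eq deg_eq.
have [i12 j12 k12] := gk_exponents_inj n_gt1 (ltn_ord j1) (ltn_ord j2) val_eq deg_eq.
by congr (_, _, _); apply: val_inj.
Qed.

End GKCurve.

Theorem mainTheorem1 (n : nat) (F : finFieldType) (L : fieldType)
  (iota : {rmorphism F -> L}) (x y z : L) :
  prime_power n -> (3 <= n)%N -> #|F| = (n ^ 6)%N ->
  (forall p : {poly F}, (map_poly iota p).[x] = 0 -> p = 0) ->
  x ^+ n + x = y ^+ n.+1 ->
  z ^+ (n ^ 2 - n + 1) = y * gk_h n x ->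
  {in Tidx n &, injective (gk_fun x y z (n:=n))} /\
  size (gk_T x y z n) = gk_genus n.
Proof.
move=> _ n_ge3 _ x_transcendental gk_eq1 gk_eq2.
have inj := gk_fun_inj (ltnW n_ge3) x_transcendental gk_eq1 gk_eq2.
split; first by move=> t1 t2 _ _; apply: inj.
rewrite /gk_T undup_id ?map_inj_uniq ?enum_uniq // size_map -cardE.
by rewrite /gk_genus -double_card_Tidx mulKn.
Qed.
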